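(* Consider a hierarchical tensor factorization with mode tree $\mathcal T$ whose weight matrices evolve under gradient flow on $\phi_H$ for $t\ge0$. For any $\nu\in\mathrm{int}(\mathcal T)$, $\nu_c\in C(\nu)$ and $r\in[R_\nu]$: $$\frac{d}{dt}\|W^{(\nu)}_{r,:}(t)\|^2=2\sigma_{\nu,r}(t)\big\langle-\nabla\mathcal L_H(\mathcal W_H(t)),\mathcal E_{\nu,r}(t)\big\rangle=\frac{d}{dt}\|W^{(\nu_c)}_{:,r}(t)\|^2.$$
   Context: Fix $N\in\mathbb N$, $D_1,\dots,D_N\in\mathbb N$; $[K]:=\{1,\dots,K\}$; norms are Frobenius norms, $\langle\cdot,\cdot\rangle$ the entrywise inner product, $\otimes$ the tensor product. A mode tree $\mathcal T$ over $[N]$ is a rooted tree whose nodes are labeled by subsets of $[N]$, with exactly $N$ leaves labeled $\{1\},\dots,\{N\}$, and where each interior node's label is the union of its children's labels; nodes are identified with labels, root $[N]$, $\mathrm{int}(\mathcal T)$ interior nodes, $Pa(\nu)$ parent, $C(\nu)$ children (fixed order). A hierarchical tensor factorization has $R_\nu\in\mathbb N$ ($\nu\in\mathrm{int}(\mathcal T)$), $R_{Pa([N])}:=1$, $R_{\{n\}}:=D_n$, weight matrices $W^{(\nu)}\in\mathbb R^{R_\nu\times R_{Pa(\nu)}}$. Intermediate tensors: $\mathcal W^{(\{n\},r)}:=W^{(\{n\})}_{:,r}$; for $\nu\in\mathrm{int}(\mathcal T)\setminus\{[N]\}$ (leaves to root), $r\in[R_{Pa(\nu)}]$: $\mathcal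 W^{(\nu,r)}:=\pi_\nu\big(\sum_{r'=1}^{R_\nu}W^{(\nu)}_{r',r}\bigotimes_{\nu_c\in C(\nu)}\mathcal W^{(\nu_c,r')}\big)$; end tensor $\mathcal W_H:=\pi_{[N]}\big(\sum_{r'=1}^{R_{[N]}}W^{([N])}_{r',1}\bigotimes_{\nu_c\in C([N])}\mathcal W^{(\nu_c,r')}\big)$, where $\pi_\nu$ permutes modes (ordered by children, each child's elements ascending) into ascending order of the elements of $\nu$. $\sigma_{\nu,r}:=\|W^{(\nu)}_{r,:}\|\prod_{\nu_c\in C(\nu)}\|W^{(\nu_c)}_{:,r}\|$. $\mathcal E_{\nu,r}$ is the end tensor obtained from the same construction except that, for every $r'\in[R_{Pa(\nu)}]$, the tensor produced at node $\nu$ (the end tensor itself if $\nu=[N]$) is replaced by $\pi_\nu\big(\sigma_{\nu,r}^{-1}W^{(\nu)}_{r,r'}\bigotimes_{\nu_c\in C(\nu)}\mathcal W^{(\nu_c,r)}\big)$; $\mathcal E_{\nu,r}:=0$ if $\sigma_{\nu,r}=0$. $\mathcal L_H:\mathbb R^{D_1\times\cdots\times D_N}\to\mathbb R_{\ge0}$ is differentiable and locally smooth, $\phi_H((W^{(\nu)})_\nu):=\mathcal L_H(\mathcal W_H)$, gradient flow: $\frac{d}{dt}W^{(\nu)}(t)=-\frac{\partial}{\partial W^{(\nu)}}\phi_H((W^{(\nu')}(t))_{\nu'})$ for all $\nu\in\mathcal T$, $t\ge0$; time-$t$ quantities are computed from the weights at time $t$. *)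

From HB Require Import structures.
From mathcomp Require Import all_boot all_order all_algebra.
From mathcomp Require Import all_classical all_reals all_analysis.
Set Implicit Arguments. Unset Strict Implicit. Unset Printing Implicit Defensive.
Import Order.TTheory GRing.Theory Num.Theory.
Import numFieldNormedType.Exports.
Local Open Scope ring_scope.

Section HTF.
Variable R : realType.
Variable N : nat.

(** Nodes are identified with their labels (subsets of [N],
    here {set 'I_N}, modes 0-based); the tree is given by its node set [T]
    and its parent map [Pa] (meaningful on non-root nodes). *)

Definition root : {set 'I_N} := [set: 'I_N].

Definition children (T : {set {set 'I_N}}) (Pa : {set 'I_N} -> {set 'I_N})
  (nu : {set 'I_N}) : {set {set 'I_N}} :=
  [set c in T | (c != root) && (Pa c == nu)].

Definition is_leaf (T : {set {set 'I_N}}) (Pa : {set 'I_N} -> {set 'I_N}) (nu : {set 'I_N}) : bool := children T Pa nu == finset.set0.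

Definition int_node (T : {set {set 'I_N}}) (Pa : {set 'I_N} -> {set 'I_N}) (nu : {set 'I_N}) : bool := (nu \in T) && ~~ is_leaf T Pa nu.

Definition is_mode_tree (T : {set {set 'I_N}}) (Pa : {set 'I_N} -> {set 'I_N}) : Prop :=
  (root \in T) /\
  [/\ (forall nu, nu \in T -> nu != root -> Pa nu \in T),
      (forall nu, nu \in T -> exists k, iter k Pa nu = root),
      (forall n : 'I_N, (finset.set1 n) \in T),
      (forall nu, nu \in T -> is_leaf T Pa nu <-> exists n : 'I_N, nu = (finset.set1 n)) &
      (forall nu, nu \in T -> ~~ is_leaf T Pa nu ->
         nu = \bigcup_(c in children T Pa nu) c)].

(** A tensor "over the modes of nu" is a function of the full multi-index that
    only reads the coordinates in nu; the tensor product of tensors over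
    disjoint mode sets is then the pointwise product, and the mode
    permutation pi_nu (sorting modes ascending) is the identity. *)
Variable D : 'I_N -> nat.

Definition idx := {dffun forall n : 'I_N, 'I_(D n)}.
Definition tensor := idx -> R.

Definition tdot (X Y : tensor) : R := \sum_(i : idx) X i * Y i.
Definition tnorm (X : tensor) : R := Num.sqrt (tdot X X).

Definition has_gradient (L : tensor -> R) (X G : tensor) : Prop :=
  forall e : R, 0 < e -> exists2 d : R, 0 < d & forall H : tensor,
    tnorm H < d ->
    `| L (fun i => X i + H i) - L X - tdot G H | <= e * tnorm H.

Definition locally_smooth (gL : tensor -> tensor) : Prop :=
  forall X : tensor, exists2 d : R, 0 < d & exists K : R,
    forall Y Z : tensor,
      tnorm (fun i => Y i - X i) < d -> tnorm (fun i => Z i - X i) < d ->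
      tnorm (fun i => gL Y i - gL Z i) <= K * tnorm (fun i => Y i - Z i).

(** * Hierarchical tensor factorization.
    Weights: W nu is the matrix W^(nu), indices 0-based, W nu i j being the
    (i,j) entry for i < R_nu, j < R_{Pa(nu)}; other entries are unused. *)
Definition weights := {set 'I_N} -> nat -> nat -> R.

Variable T : {set {set 'I_N}}.
Variable Pa : {set 'I_N} -> {set 'I_N}.
Variable Rint : {set 'I_N} -> nat.

Definition rk (nu : {set 'I_N}) : nat :=
  if [pick n : 'I_N | nu == (finset.set1 n)] is Some n then D n else Rint nu.

Definition prk (nu : {set 'I_N}) : nat :=
  if nu == root then 1%N else rk (Pa nu).

Definition rownorm2 (W : weights) nu r : R := \sum_(j < prk nu) W nu r j ^+ 2.
Definition colnorm2 (W : weights) nu r : R := \sum_(i < rk nu) W nu i r ^+ 2.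

Definition sigma (W : weights) nu r : R :=
  Num.sqrt (rownorm2 W nu r) * \prod_(c in children T Pa nu) Num.sqrt (colnorm2 W c r).

(** The bottom-up construction, with an optional override [ov nu r] of the
    tensor produced at node nu for parent index r; [k] is fuel (the depth of
    a mode tree over [N] is at most N). *)
Fixpoint tens (ov : {set 'I_N} -> nat -> option tensor) (W : weights)
   (k : nat) (nu : {set 'I_N}) (r : nat) : tensor :=
  if ov nu r is Some X then X else
  match k with
  | 0 => fun _ => 0
  | k'.+1 =>
    if [pick n : 'I_N | nu == (finset.set1 n)] is Some n then
      fun i => W nu (nat_of_ord (i n)) r
    else
      fun i => \sum_(r' < rk nu)
                  W nu r' r * \prod_(c in children T Pa nu) tens ov W k' c r' i
  end.

Definition no_ov : {set 'I_N} -> nat -> option tensor := fun _ _ => None.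

Definition itens (W : weights) nu r : tensor := tens no_ov W N nu r.

Definition end_tensor (W : weights) : tensor := tens no_ov W N root 0.

Definition E_tensor (W : weights) (nu : {set 'I_N}) (r : nat) : tensor :=
  if sigma W nu r == 0 then fun _ => 0 else
  let ov := fun mu r' =>
    if mu == nu then
      Some (fun i => (sigma W nu r)^-1 * W nu r r'
                     * \prod_(c in children T Pa nu) itens W c r i)
    else None in
  tens ov W N root 0.

Definition phi (L : tensor -> R) (W : weights) : R := L (end_tensor W).

Definition upd (W : weights) nu i j (s : R) : weights :=
  fun mu a b => if [&& mu == nu, a == i & b == j] then W mu a b + s else W mu a b.

Definition dphi (L : tensor -> R) (W : weights) nu i j : R :=
  derive1 (fun s : R => phi L (upd W nu i j s)) 0.

Definition gradient_flow (L : tensor -> R) (Wt : R -> weights) : Prop :=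
  forall t : R, 0 <= t -> forall nu, nu \in T -> forall i j : nat,
    (i < rk nu)%N -> (j < prk nu)%N ->
    is_derive t 1 (fun s : R => Wt s nu i j) (- dphi L (Wt t) nu i j).

End HTF.

From Pilot Require Import Defs.
From HB Require Import structures.
From mathcomp Require Import all_boot all_order all_algebra.
From mathcomp Require Import all_classical all_reals all_analysis.
From mathcomp Require Import ring lra.
Import Order.TTheory GRing.Theory Num.Theory.
Import numFieldNormedType.Exports.
Local Open Scope ring_scope.
Set Implicit Arguments. Unset Strict Implicit. Unset Printing Implicit Defensive.

(* Every entry of W^(nu) and of W^(nu_c) enters the end tensor affinely, so the
   partial derivative of phi_H in an entry w is <grad L_H(W_H), dW_H/dw>, and
   along the flow d/dt |row or column|^2 = -2 sum_w w * dphi_H/dw.  The end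
   tensor computed with the tensors produced at nu replaced by a family g is
   linear in g, because nu is reached from the root along a single path of the
   tree.  Row r of W^(nu) and column r of W^(nu_c) only occur in the summand
   r' = r at nu, which is homogeneous of degree one in each of them; Euler's
   identity therefore turns both sums into <grad L_H(W_H), sigma_{nu,r} E_{nu,r}>. *)

Section ModeTree.
Variables (N : nat) (T : {set {set 'I_N}}) (Pa : {set 'I_N} -> {set 'I_N}).
Hypothesis HT : is_mode_tree T Pa.
Local Notation top := (Defs.root N).
Local Notation ch := (children T Pa).

Lemma in_children c mu : c \in ch mu -> [/\ c \in T, c != top & Pa c = mu].
Proof. by rewrite inE => /and3P[? ? /eqP]. Qed.

Lemma root_in_tree : top \in T.
Proof. by case: HT. Qed.

Lemma parent_in_tree c : c \in T -> c != top -> Pa c \in T.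
Proof. by case: HT => _ [+ _ _ _ _]; apply. Qed.

Lemma in_tree_of_child c mu : c \in ch mu -> mu \in T.
Proof. by case/in_children => cT cr <-; apply: parent_in_tree. Qed.

Lemma child_in_children c : c \in T -> c != top -> c \in ch (Pa c).
Proof. by move=> cT cr; rewrite inE cT cr eqxx. Qed.

Lemma leafP mu : mu \in T -> is_leaf T Pa mu <-> exists n : 'I_N, mu = [set n].
Proof. by case: HT => _ [_ _ _ + _]; apply. Qed.

Lemma children_nonleaf c mu : c \in ch mu -> ~~ is_leaf T Pa mu.
Proof. by move=> Hc; apply/set0Pn; exists c. Qed.

Lemma child_proper c mu : c \in ch mu -> c \proper mu.
Proof.
move=> Hc; have muT := in_tree_of_child Hc; have [cT cr Pc] := in_children Hc.
rewrite finset.properEneq; apply/andP; split.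
  apply: contra cr => /eqP cmu; case: HT => _ [_ Hroot _ _ _].
  have [k <-] := Hroot c cT; rewrite iter_fix //; congruence.
case: HT => _ [_ _ _ _ Hunion].
by rewrite [mu](Hunion mu muT (children_nonleaf Hc)); exact: finset.bigcup_sup Hc.
Qed.

Lemma card_child_lt c mu : c \in ch mu -> (#|c| < #|mu|)%N.
Proof. by move/child_proper/fintype.proper_card. Qed.

Lemma card_tree_gt0 mu : mu \in T -> (0 < #|mu|)%N.
Proof.
move=> muT; have [/(leafP muT)[n ->]|] := boolP (is_leaf T Pa mu).
  by rewrite cards1.
by case/set0Pn => c /card_child_lt; apply: leq_ltn_trans.
Qed.

Lemma card_le_N (mu : {set 'I_N}) : (#|mu| <= N)%N.
Proof. by rewrite -[X in (_ <= X)%N]card_ord max_card. Qed.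

Lemma pick_set1 (n : 'I_N) : [pick m | [set n] == [set m]] = Some n.
Proof.
case: pickP => [m /eqP/set1_inj -> // | /(_ n)].
by rewrite eqxx.
Qed.

Lemma pick_set1_nonleaf mu : mu \in T -> ~~ is_leaf T Pa mu ->
  [pick n : 'I_N | mu == [set n]] = None.
Proof.
move=> muT nl; case: pickP => // n /eqP E.
by move: nl; rewrite (proj2 (leafP muT)) //; exists n.
Qed.

(* [Pa] is junk at the root, so ancestor chains must not pass through it. *)
Definition descendant (m mu : {set 'I_N}) : Prop :=
  exists j, iter j Pa m = mu /\ forall i, (i < j)%N -> iter i Pa m != top.

Lemma descendant_refl m : descendant m m.
Proof. by exists 0%N. Qed.

Lemma descendant_child m c mu : c \in ch mu -> descendant m c -> descendant m mu.
Proof.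
case/in_children => _ cr Pc [j [Hj Hi]]; exists j.+1; split; first by rewrite iterS Hj.
by move=> i; rewrite ltnS leq_eqVlt => /predU1P[->|/Hi //]; rewrite Hj.
Qed.

Lemma descendant_parent m mu : descendant m mu -> m != mu -> descendant (Pa m) mu.
Proof.
case=> [[|j] [Hj Hi]]; first by rewrite -Hj eqxx.
by move=> _; exists j; split=> [|i Hij]; rewrite -iterSr ?Hi.
Qed.

Lemma descendant_total m a b :
  descendant m a -> descendant m b -> descendant a b \/ descendant b a.
Proof.
have step j1 j2 : (j1 <= j2)%N -> (forall i, (i < j2)%N -> iter i Pa m != top) ->
    descendant (iter j1 Pa m) (iter j2 Pa m).
  move=> le12 Hi; exists (j2 - j1)%N; rewrite -iterD subnK //; split=> // i lt.
  by rewrite -iterD Hi // -(subnK le12) ltn_add2r.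
case=> [j1 [<- Hi1]] [j2 [<- Hi2]].
by case: (leqP j1 j2) => [le|/ltnW le]; [left; apply: step | right; apply: step].
Qed.

Lemma descendant_card_le m mu : m \in T -> descendant m mu -> (#|m| <= #|mu|)%N.
Proof.
move=> + [j [<- Hi]]; elim: j m Hi => // j IH m Hi mT.
have mr : m != top by exact: (Hi 0%N).
rewrite iterSr; apply: leq_trans (ltnW (card_child_lt (child_in_children mT mr))) _.
by apply: IH (parent_in_tree mT mr) => i lt; rewrite -iterSr Hi.
Qed.

Lemma not_descendant_child m c : c \in ch m -> ~ descendant m c.
Proof.
move=> Hc /(descendant_card_le (in_tree_of_child Hc)).
by rewrite leqNgt card_child_lt.
Qed.

Lemma descendant_child_uniq m mu c1 c2 : c1 \in ch mu -> c2 \in ch mu ->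
  descendant m c1 -> descendant m c2 -> c1 = c2.
Proof.
have below a b : a \in ch mu -> b \in ch mu -> descendant a b -> a = b.
  move=> Ha Hb Hab; have [//|ne] := eqVneq a b; have [_ _ Pa_a] := in_children Ha.
  by exfalso; apply: (not_descendant_child Hb); rewrite -Pa_a; apply: descendant_parent.
move=> H1 H2 D1 D2; case: (descendant_total D1 D2) => D12.
  exact: below H1 H2 D12.
exact/esym/(below _ _ H2 H1 D12).
Qed.

Lemma iter_parent_in_tree m j : m \in T ->
  (forall i, (i < j)%N -> iter i Pa m != top) -> iter j Pa m \in T.
Proof.
move=> mT; elim: j => // j IH Hi; rewrite iterS parent_in_tree ?IH ?Hi //.
by move=> i lt; apply/Hi/ltnW.
Qed.

Lemma descendant_via_child m mu : m \in T -> descendant m mu -> m != mu ->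
  exists2 c, c \in ch mu & descendant m c.
Proof.
move=> mT [[|j] [Hj Hi]]; first by rewrite -Hj eqxx.
move=> _; exists (iter j Pa m); last by exists j; split=> // i lt; apply/Hi/ltnW.
rewrite -Hj iterS child_in_children ?Hi //.
by apply: iter_parent_in_tree => // i lt; apply/Hi/ltnW.
Qed.

Lemma descendant_root m : m \in T -> descendant m top.
Proof.
move=> mT; case: HT => _ [_ Hroot _ _ _].
have exP : exists k, iter k Pa m == top by have [k Hk] := Hroot m mT; exists k; apply/eqP.
case: (ex_minnP exP) => k /eqP Hk Hmin; exists k; split=> // i lt.
by apply/negP => /Hmin; rewrite leqNgt lt.
Qed.

Lemma set1_in_tree (n : 'I_N) : [set n] \in T.
Proof. by case: HT => _ [_ _ + _ _]; apply. Qed.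

Lemma root_descendant m : descendant top m -> m = top.
Proof. by case=> [[|j] [<- // Hi]]; have := Hi 0%N isT; rewrite eqxx. Qed.

End ModeTree.

Section TensorCalculus.
Variables (R : realType) (N : nat) (D : 'I_N -> nat).
Local Notation tensR := (tensor R D).

Lemma tdotNl (G Y : tensR) : tdot (fun i => - G i) Y = - tdot G Y.
Proof. by rewrite /tdot -sumrN; apply: eq_bigr => i _; rewrite mulNr. Qed.

Lemma tdotZr (G Y : tensR) h : tdot G (fun i => h * Y i) = h * tdot G Y.
Proof. by rewrite /tdot mulr_sumr; apply: eq_bigr => i _; rewrite mulrCA. Qed.

Lemma tdot_sumr (G : tensR) n (a : 'I_n -> R) (Y : 'I_n -> tensR) :
  tdot G (fun i => \sum_(j < n) a j * Y j i) = \sum_(j < n) a j * tdot G (Y j).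
Proof.
rewrite /tdot; under eq_bigr do rewrite mulr_sumr.
rewrite exchange_big; apply: eq_bigr => j _; rewrite mulr_sumr.
by apply: eq_bigr => i _; rewrite mulrCA.
Qed.

Lemma tnormZ (h : R) (Y : tensR) : tnorm (fun i => h * Y i) = `|h| * tnorm Y.
Proof.
rewrite /tnorm /tdot.
have -> : \sum_i (h * Y i) * (h * Y i) = h ^+ 2 * \sum_i Y i * Y i.
  by rewrite mulr_sumr; apply: eq_bigr => i _; rewrite mulrACA expr2.
by rewrite sqrtrM ?sqr_ge0 // sqrtr_sqr.
Qed.

Lemma has_gradient_is_derive (L : tensR -> R) (G X Y : tensR) : has_gradient L X G ->
  is_derive (0 : R) (1 : R) (fun s : R => L (fun i => X i + s * Y i)) (tdot G Y).
Proof.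
move=> HG; set f := fun s : R => L (fun i => X i + s * Y i).
have fX : f 0 = L X by rewrite /f; congr L; apply/funext => i; rewrite mul0r addr0.
suff Hc : ((fun h : R => h^-1 *: ((f \o shift 0) (h *: 1) - f 0)) @ 0^' --> tdot G Y)%classic.
  by apply: DeriveDef; [apply/cvg_ex; exists (tdot G Y) | exact: cvg_lim Hc].
apply/cvgrPdist_le => e e0; set M := tnorm Y + 1.
have M0 : 0 < M by rewrite /M ltr_wpDl ?sqrtr_ge0.
have [d d0 Hd] := HG (e / M) (divr_gt0 e0 M0).
near=> h.
have hn0 : h != 0 by near: h; exact: nbhs_dnbhs_neq.
have hd : `|h| < d / M by near: h; apply: dnbhs0_lt; exact: divr_gt0.
have hY : tnorm (fun i => h * Y i) < d.
  rewrite tnormZ (@le_lt_trans _ _ (`|h| * M)) -?ltr_pdivlMr //.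
  by rewrite ler_wpM2l // /M lerDl.
have := Hd _ hY; rewrite tdotZr tnormZ => Hrem.
rewrite /= addr0 -[h%:A]/(h * 1) mulr1 fX -/(f h).
rewrite -[tdot G Y](mulKf hn0) -mulrBr normrM normfV.
rewrite ler_pdivrMl ?normr_gt0 // distrC.
apply: le_trans Hrem _; rewrite mulrCA ler_wpM2l //.
by rewrite mulrAC ler_pdivrMr // ler_wpM2l ?(ltW e0) // /M lerDl.
Unshelve. all: by end_near.
Qed.

Lemma is_derive_sum_sqr (t : R) n (f : 'I_n -> R -> R) (d : 'I_n -> R) :
  (forall j, is_derive t 1 (f j) (- d j)) ->
  is_derive t 1 (fun s => \sum_(j < n) f j s ^+ 2) (- 2 * \sum_(j < n) f j t * d j).
Proof.
move=> Hd.
have -> : (fun s => \sum_(j < n) f j s ^+ 2) = \sum_(j < n) f j ^+ 2.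
  by apply/funext => s; rewrite fct_sumE; apply: eq_bigr => j _; rewrite exprfctE.
apply: is_derive_eq; rewrite mulr_sumr; apply: eq_bigr => j _.
by rewrite expr1 /=; change ((2 * f j t) * - d j = -2 * (f j t * d j)); ring.
Qed.

End TensorCalculus.

Lemma sqrt_sum_sqr_eq0 (R : realType) n (f : nat -> R) :
  Num.sqrt (\sum_(j < n) f j ^+ 2) = 0 -> forall j, (j < n)%N -> f j = 0.
Proof.
move/eqP; rewrite sqrtr_eq0 => Hle j lt.
have Hsum : \sum_(j < n) f j ^+ 2 = 0.
  by apply/le_anti; rewrite Hle sumr_ge0 // => i _; apply: sqr_ge0.
have := @psumr_eq0P _ _ predT (fun i : 'I_n => f i ^+ 2) (fun i _ => sqr_ge0 _) Hsum (Ordinal lt) isT.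
by move/eqP; rewrite sqrf_eq0 => /eqP.
Qed.

Lemma sum_ord_delta (R : semiRingType) n (F : nat -> R) j0 : (j0 < n)%N ->
  \sum_(i < n) ((i : nat) == j0)%:R * F i = F j0.
Proof.
move=> lt; rewrite (bigD1 (Ordinal lt)) //= eqxx mul1r big1 ?addr0 // => i ne.
by rewrite (negbTE (ne : (i : nat) != j0)) mul0r.
Qed.

Lemma sum_upd_mul (R : comRingType) n (f F : nat -> R) j0 (b : bool) s : (j0 < n)%N ->
  \sum_(i < n) (if ((i : nat) == j0) && b then f i + s else f i) * F i =
  \sum_(i < n) f i * F i + s * (b%:R * F j0).
Proof.
move=> lt; rewrite -(sum_ord_delta (fun i => s * (b%:R * F i)) lt) -big_split.
by apply: eq_bigr => i _ /=; case: eqP => _; case: b => /=; ring.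
Qed.

Section Construction.
Variables (R : realType) (N : nat) (D : 'I_N -> nat) (T : {set {set 'I_N}})
  (Pa : {set 'I_N} -> {set 'I_N}) (Rint : {set 'I_N} -> nat).
Hypothesis HT : is_mode_tree T Pa.
Local Notation tensR := (tensor R D).
Local Notation tns := (@tens R N D T Pa Rint).
Local Notation itn := (@itens R N D T Pa Rint).
Local Notation ch := (children T Pa).
Local Notation rk := (rk D Rint).
Local Notation top := (Defs.root N).

Lemma tens_fuel ov W k k' mu r : mu \in T -> (#|mu| <= k)%N -> (#|mu| <= k')%N ->
  tns ov W k mu r = tns ov W k' mu r.
Proof.
elim: k k' mu r => [|k IH] [|k'] mu r muT Hk Hk' //;
  have pos := card_tree_gt0 HT muT.
- by have := leq_trans pos Hk.
- by have := leq_trans pos Hk'.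
rewrite /=; case: (ov mu r) => //; case: pickP => // _.
apply/funext => i; apply: eq_bigr => r' _; congr (_ * _); apply: eq_bigr => c Hc.
have [cT _ _] := in_children Hc; have lt := card_child_lt HT Hc.
by rewrite (IH k') // -ltnS (leq_trans lt).
Qed.

Lemma itensE W mu r : mu \in T -> ~~ is_leaf T Pa mu ->
  itn W mu r = fun i => \sum_(r' < rk mu) W mu r' r * \prod_(c in ch mu) itn W c r' i.
Proof.
move=> muT nl; rewrite /itens (tens_fuel _ _ _ muT (card_le_N mu) (leqnn _)).
rewrite -(prednK (card_tree_gt0 HT muT)) /= (pick_set1_nonleaf HT muT nl).
apply/funext => i; apply: eq_bigr => r' _; congr (_ * _); apply: eq_bigr => c Hc.
have [cT _ _] := in_children Hc.
rewrite (@tens_fuel _ _ _ N _ _ cT) ?card_le_N //.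
by rewrite -ltnS prednK ?(card_child_lt HT Hc) ?(card_tree_gt0 HT muT).
Qed.

Lemma itens_leaf W (n : 'I_N) r : itn W [set n] r = fun i => W [set n] (i n) r.
Proof.
rewrite /itens (@tens_fuel _ _ N 1%N _ _ (set1_in_tree HT n) (card_le_N _)) ?cards1 //=.
by rewrite pick_set1.
Qed.

Lemma tens_local ov W1 W2 k mu r :
  (forall m, descendant Pa m mu -> W1 m = W2 m) -> tns ov W1 k mu r = tns ov W2 k mu r.
Proof.
elim: k mu r => [|k IH] mu r HW //=; case: (ov mu r) => //.
rewrite (HW mu (descendant_refl Pa mu)); case: pickP => // _.
apply/funext => i; apply: eq_bigr => r' _; congr (_ * _); apply: eq_bigr => c Hc.
by rewrite (IH c) // => m /(descendant_child Hc)/HW.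
Qed.

Lemma upd_ne (W : weights R N) x a b s m : m != x -> upd W x a b s m = W m.
Proof.
by move=> ne; apply/funext => a'; apply/funext => b'; rewrite /upd (negbTE ne).
Qed.

Definition node_basis W (x : {set 'I_N}) (a : nat) : tensR :=
  if [pick n : 'I_N | x == [set n]] is Some n then fun i => ((i n : nat) == a)%:R
  else fun i => \prod_(c in ch x) itn W c a i.

Lemma itens_expand W x r : x \in T ->
  itn W x r = fun i => \sum_(a < rk x) W x a r * node_basis W x a i.
Proof.
move=> xT; have [/(leafP HT xT)[n ->]|nl] := boolP (is_leaf T Pa x); last first.
  by rewrite itensE // /node_basis (pick_set1_nonleaf HT xT nl).
rewrite itens_leaf /node_basis /Defs.rk pick_set1; apply/funext => i.
rewrite (bigD1 (i n)) //= eqxx mulr1 big1 ?addr0 // => a ne.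
by rewrite eq_sym (negbTE (ne : (a : nat) != i n)) mulr0.
Qed.

Lemma node_basis_upd W x a b s i : node_basis (upd W x a b s) x i = node_basis W x i.
Proof.
rewrite /node_basis; case: pickP => // _.
apply/funext => t; apply: eq_bigr => c Hc; rewrite /itens (tens_local _ (W2 := W)) // => m Hm.
rewrite upd_ne //; apply: contraPneq Hm => ->.
exact: (not_descendant_child HT Hc).
Qed.

Lemma itens_upd W x a r s r' : x \in T -> (a < rk x)%N ->
  itn (upd W x a r s) x r' = fun i => itn W x r' i + s * ((r' == r)%:R * node_basis W x a i).
Proof.
move=> xT lt; rewrite !itens_expand //; apply/funext => i.
under eq_bigr do rewrite node_basis_upd.
by rewrite /upd eqxx (sum_upd_mul (fun a' => W x a' r') (fun a' => node_basis W x a' i)).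
Qed.

Lemma dphi_eq_tdot L W x a b (G Y : tensR) : has_gradient L (end_tensor T Pa Rint W) G ->
  (forall s, end_tensor T Pa Rint (upd W x a b s) = fun i => end_tensor T Pa Rint W i + s * Y i) ->
  dphi T Pa Rint L W x a b = tdot G Y.
Proof.
move=> HG HE; rewrite /dphi /phi; under eq_fun do rewrite HE.
by rewrite derive1E; case: (has_gradient_is_derive Y HG).
Qed.

Section Override.
Variable nu : {set 'I_N}.
Hypothesis nuT : nu \in T.
Hypothesis nuI : ~~ is_leaf T Pa nu.

Definition override_at (g : nat -> tensR) (mu : {set 'I_N}) (r : nat) : option tensR :=
  if mu == nu then Some (g r) else None.

Definition end_with W g : tensR := tns (override_at g) W N top 0.

Lemma override_at_ne g mu r : mu != nu -> override_at g mu r = None.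
Proof. by rewrite /override_at => /negbTE ->. Qed.

Lemma tens_override_at g W k r : tns (override_at g) W k nu r = g r.
Proof. by case: k => [|k] /=; rewrite /override_at eqxx. Qed.

Lemma tens_override_outside g W k mu r : ~ descendant Pa nu mu ->
  tns (override_at g) W k mu r = tns (@no_ov R N D) W k mu r.
Proof.
have ne m : ~ descendant Pa nu m -> m != nu.
  by apply: contra_notN => /eqP ->; apply: descendant_refl.
elim: k mu r => [|k IH] mu r Hmu; rewrite /= override_at_ne ?ne //.
case: pickP => // _; apply/funext => i; apply: eq_bigr => r' _; congr (_ * _).
by apply: eq_bigr => c Hc; rewrite IH // => /(descendant_child Hc).
Qed.

Lemma end_with_local W1 W2 g : (forall m, ~ descendant Pa m nu -> W1 m = W2 m) ->
  end_with W1 g = end_with W2 g.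
Proof.
(* Nodes strictly below nu are only reached through nu, where the override stops the recursion. *)
move=> HW; suff tens_eq k mu r : ~ (descendant Pa mu nu /\ mu != nu) ->
    tns (override_at g) W1 k mu r = tns (override_at g) W2 k mu r.
  by apply: tens_eq => -[/root_descendant ->]; rewrite eqxx.
elim: k mu r => [|k IH] mu r Hmu; have [->|ne] := eqVneq mu nu;
  rewrite ?tens_override_at //= override_at_ne //.
rewrite HW => [|Hd]; last by apply: Hmu.
case: pickP => // _; apply/funext => i; apply: eq_bigr => r' _; congr (_ * _).
apply: eq_bigr => c Hc; rewrite IH // => -[Hd cnu]; apply: Hmu; split=> //.
by have [_ _ <-] := in_children Hc; apply: descendant_parent.
Qed.

Lemma end_with_restrict W g1 g2 :
  (forall r', (r' < prk D Pa Rint nu)%N -> g1 r' = g2 r') -> end_with W g1 = end_with W g2.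
Proof.
move=> Hg; suff tens_eq k mu r : (r < prk D Pa Rint mu)%N ->
    tns (override_at g1) W k mu r = tns (override_at g2) W k mu r.
  by apply: tens_eq; rewrite /prk eqxx.
elim: k mu r => [|k IH] mu r Hr; have [E|ne] := eqVneq mu nu;
  rewrite ?E ?tens_override_at ?Hg -?E //= !override_at_ne //.
case: pickP => // _; apply/funext => i; apply: eq_bigr => r' _; congr (_ * _).
apply: eq_bigr => c Hc; have [_ cr Pc] := in_children Hc.
by rewrite IH // /prk (negbTE cr) Pc.
Qed.

Lemma tens_override_linear g1 g2 a W k mu r : descendant Pa nu mu ->
  tns (override_at (fun r' i => g1 r' i + a * g2 r' i)) W k mu r =
  fun i => tns (override_at g1) W k mu r i + a * tns (override_at g2) W k mu r i.
Proof.
elim: k mu r => [|k IH] mu r Hd; have [->|ne] := eqVneq mu nu;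
  rewrite ?tens_override_at //= ?override_at_ne //.
  by apply/funext => i; rewrite mulr0 addr0.
have [c0 Hc0 Hd0] : exists2 c, c \in ch mu & descendant Pa nu c.
  by apply: descendant_via_child; rewrite // eq_sym.
rewrite (pick_set1_nonleaf HT (in_tree_of_child HT Hc0) (children_nonleaf Hc0)).
have split h r' i : \prod_(c in ch mu) tns (override_at h) W k c r' i =
    tns (override_at h) W k c0 r' i * \prod_(c in ch mu | c != c0) tns (@no_ov R N D) W k c r' i.
  rewrite (bigD1 c0) //=; congr (_ * _); apply: eq_bigr => c /andP[Hc ne0].
  rewrite tens_override_outside // => Hdc; move/eqP: ne0; apply.
  exact: descendant_child_uniq Hc Hc0 Hdc Hd0.
apply/funext => i; under eq_bigr do rewrite split (IH c0 _ Hd0) /=.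
under [X in _ = X + _]eq_bigr do rewrite split.
under [X in _ = _ + _ * X]eq_bigr do rewrite split.
by rewrite mulr_sumr -big_split; apply: eq_bigr => r' _ /=; ring.
Qed.

Lemma end_with_linear W g1 g2 a :
  end_with W (fun r' i => g1 r' i + a * g2 r' i) =
  fun i => end_with W g1 i + a * end_with W g2 i.
Proof. exact: tens_override_linear (descendant_root HT nuT). Qed.

Lemma end_with0 W g : (forall r' i, g r' i = 0) -> end_with W g = fun=> 0.
Proof.
move=> g0; apply/funext => i; have := congr1 (fun X => X i) (end_with_linear W g g 1).
have -> : (fun r' i => g r' i + 1 * g r' i) = g.
  by apply/funext => r'; apply/funext => j; rewrite !g0 mulr0 addr0.
by move=> /=; lra.
Qed.

Lemma end_withZ W a g : end_with W (fun r' i => a * g r' i) = fun i => a * end_with W g i.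
Proof.
transitivity (end_with W (fun r' i => (fun _ _ => 0) r' i + a * g r' i)).
  by congr end_with; apply/funext => r'; apply/funext => i; rewrite add0r.
by rewrite end_with_linear end_with0 //; apply/funext => i; rewrite add0r.
Qed.

Lemma end_with_sum W n (a : 'I_n -> R) (G : 'I_n -> nat -> tensR) :
  end_with W (fun r' i => \sum_(j < n) a j * G j r' i) =
  fun i => \sum_(j < n) a j * end_with W (G j) i.
Proof.
elim: n a G => [|n IH] a G.
  rewrite end_with0 => [|r' i]; last by rewrite big_ord0.
  by apply/funext => i; rewrite big_ord0.
pose w := widen_ord (leqnSn n).
transitivity (end_with W (fun r' i =>
    \sum_(j < n) a (w j) * G (w j) r' i + a ord_max * G ord_max r' i)).
  by congr end_with; apply/funext => r'; apply/funext => i; rewrite big_ord_recr.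
by rewrite end_with_linear IH; apply/funext => i; rewrite big_ord_recr.
Qed.

Lemma end_tensor_with W : end_tensor T Pa Rint W = end_with W (itn W nu).
Proof.
rewrite /end_tensor /end_with; suff tens_eq k mu r : mu \in T -> (#|mu| <= k)%N ->
    tns (override_at (itn W nu)) W k mu r = tns (@no_ov R N D) W k mu r.
  by rewrite tens_eq ?(root_in_tree HT) ?card_le_N.
elim: k mu r => [|k IH] mu r muT Hk; first by have := leq_trans (card_tree_gt0 HT muT) Hk.
case: (eqVneq mu nu) muT Hk => [-> _ Hk|ne muT Hk].
  by rewrite tens_override_at /itens (tens_fuel _ _ _ nuT (card_le_N nu) Hk).
rewrite /= override_at_ne //; case: pickP => // _.
apply/funext => i; apply: eq_bigr => r' _; congr (_ * _); apply: eq_bigr => c Hc.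
have [cT _ _] := in_children Hc.
by rewrite IH // -ltnS (leq_trans (card_child_lt HT Hc)).
Qed.

Definition child_prod W r : tensR := fun i => \prod_(c in ch nu) itn W c r i.

Definition component W r : tensR := end_with W (fun r' i => W nu r r' * child_prod W r i).

Lemma sigma_mul_E_tensor W r :
  (fun i => sigma D T Pa Rint W nu r * E_tensor T Pa Rint W nu r i) = component W r.
Proof.
rewrite /E_tensor; set s := sigma D T Pa Rint W nu r.
have [s0|sn0] := eqVneq s 0; last first.

  change (tns _ W N top 0) with (end_with W (fun r' i => s^-1 * W nu r r' * child_prod W r i)).
  under [X in end_with W X]eq_fun do under eq_fun do rewrite -mulrA.
  by rewrite end_withZ; apply/funext => i; rewrite mulVKf.
under eq_fun do rewrite mulr0; apply/esym.
move: s0; rewrite /s /sigma => /eqP; rewrite mulf_eq0 => /orP[/eqP row0|].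
  rewrite /component (@end_with_restrict _ _ (fun _ _ => 0)) ?end_with0 // => r' lt.
  by apply/funext => i; rewrite (sqrt_sum_sqr_eq0 row0) ?mul0r.
case/prodf_eq0 => c Hc /eqP col0; have [cT _ _] := in_children Hc.
rewrite /component end_with0 // => r' i.
rewrite /child_prod (bigD1 c) //= (itens_expand _ _ cT) big1 ?mul0r ?mulr0 //.
by move=> a _; rewrite (@sqrt_sum_sqr_eq0 _ _ (fun a => W c a r) col0) ?mul0r.
Qed.

(* The derivatives of W^(nu,r') in the entries W^(nu)_{r,j} and W^(x)_{a,r}, x a child of nu. *)
Definition row_partial W r j : nat -> tensR := fun r' i => (r' == j)%:R * child_prod W r i.

Definition col_partial W x a r : nat -> tensR := fun r' i =>
  W nu r r' * node_basis W x a i * \prod_(c in ch nu | c != x) itn W c r i.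

Lemma end_tensor_upd_row W r j s : (r < rk nu)%N ->
  end_tensor T Pa Rint (upd W nu r j s) =
  fun i => end_tensor T Pa Rint W i + s * end_with W (row_partial W r j) i.
Proof.
move=> Hr; rewrite !end_tensor_with (end_with_local (W2 := W)) => [|m Hm]; last first.
  by rewrite upd_ne //; apply: contra_not_neq Hm => ->; apply: descendant_refl.
have children_upd c r' : c \in ch nu -> itn (upd W nu r j s) c r' = itn W c r'.
  move=> Hc; rewrite /itens; apply: tens_local => m Hm; rewrite upd_ne //.
  apply: contraPneq Hm => ->.
  exact: (not_descendant_child HT Hc).
suff -> : itn (upd W nu r j s) nu = fun r' i => itn W nu r' i + s * row_partial W r j r' i.
  exact: end_with_linear.
apply/funext => r'; rewrite !itensE //; apply/funext => i.
under eq_bigr do under eq_bigr => c Hc do rewrite children_upd //.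
by rewrite /upd eqxx (sum_upd_mul (fun a => W nu a r') (fun a => child_prod W a i)).
Qed.

Lemma end_with_row_sum (W : weights R N) r :
  (fun i => \sum_(j < prk D Pa Rint nu) W nu r j * end_with W (row_partial W r j) i) =
  component W r.
Proof.
rewrite -end_with_sum /component; apply: end_with_restrict => r' lt; apply/funext => i.
rewrite -(sum_ord_delta (fun j => W nu r j * child_prod W r i) lt).
by apply: eq_bigr => j _; rewrite /row_partial eq_sym mulrCA.
Qed.

Lemma end_tensor_upd_col W x a r s : x \in ch nu -> (a < rk x)%N -> (r < rk nu)%N ->
  end_tensor T Pa Rint (upd W x a r s) =
  fun i => end_tensor T Pa Rint W i + s * end_with W (col_partial W x a r) i.
Proof.
move=> Hx Ha Hr; have [xT _ _] := in_children Hx.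
have x_below : descendant Pa x nu by apply: descendant_child Hx (descendant_refl Pa x).
rewrite !end_tensor_with (end_with_local (W2 := W)) => [|m Hm]; last first.
  by rewrite upd_ne //; apply: contra_not_neq Hm => ->.
have siblings_upd c r' : c \in ch nu -> c != x -> itn (upd W x a r s) c r' = itn W c r'.
  move=> Hc cx; rewrite /itens; apply: tens_local => m Hm; rewrite upd_ne //.
  apply: contraPneq Hm => -> Hxc; apply: (not_descendant_child HT Hc).
  by have [_ _ <-] := in_children Hx; apply: descendant_parent; rewrite // eq_sym.
suff -> : itn (upd W x a r s) nu = fun r' i => itn W nu r' i + s * col_partial W x a r r' i.
  exact: end_with_linear.
apply/funext => r'; rewrite !itensE // upd_ne; last first.
  by apply: contraTneq (card_child_lt HT Hx) => ->; rewrite ltnn.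
apply/funext => i; rewrite /col_partial.
rewrite -(sum_ord_delta (fun r'' => s * (W nu r'' r' * node_basis W x a i *
  \prod_(c in ch nu | c != x) itn W c r'' i)) Hr) -big_split; apply: eq_bigr => r'' _ /=.
rewrite (bigD1 x) // [X in _ = _ * X + _](bigD1 x) //= itens_upd //.
under eq_bigr => c /andP[Hc cx] do rewrite siblings_upd //.
ring.
Qed.

Lemma end_with_col_sum (W : weights R N) x r : x \in ch nu ->
  (fun i => \sum_(a < rk x) W x a r * end_with W (col_partial W x a r) i) = component W r.
Proof.
move=> Hx; have [xT _ _] := in_children Hx.
rewrite -end_with_sum /component; congr end_with; apply/funext => r'; apply/funext => i.
rewrite /child_prod (bigD1 x) //= (itens_expand _ _ xT) mulr_suml mulr_sumr.
by apply: eq_bigr => a _; rewrite /col_partial; ring.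
Qed.

Variables (L : tensR -> R) (gL : tensR -> tensR).
Hypothesis HL : forall X, has_gradient L X (gL X).

Lemma dphi_row_sum (W : weights R N) r : (r < rk nu)%N ->
  \sum_(j < prk D Pa Rint nu) W nu r j * dphi T Pa Rint L W nu r j =
  tdot (gL (end_tensor T Pa Rint W)) (component W r).
Proof.
move=> Hr; under eq_bigr => j _ do
  rewrite (dphi_eq_tdot (HL _) (fun s => end_tensor_upd_row W j s Hr)).
by rewrite -tdot_sumr end_with_row_sum.
Qed.

Lemma dphi_col_sum (W : weights R N) x r : x \in ch nu -> (r < rk nu)%N ->
  \sum_(a < rk x) W x a r * dphi T Pa Rint L W x a r =
  tdot (gL (end_tensor T Pa Rint W)) (component W r).
Proof.
move=> Hx Hr; under eq_bigr => a _ do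
  rewrite (dphi_eq_tdot (HL _) (fun s => end_tensor_upd_col W s Hx (ltn_ord a) Hr)).
by rewrite -tdot_sumr end_with_col_sum.
Qed.

End Override.
End Construction.

Theorem lemma13 (R : realType) (N : nat) (D : 'I_N -> nat)
  (T : {set {set 'I_N}}) (Pa : {set 'I_N} -> {set 'I_N})
  (Rint : {set 'I_N} -> nat)
  (L : tensor R D -> R) (gL : tensor R D -> tensor R D)
  (Wt : R -> weights R N) :
  is_mode_tree T Pa ->
  (forall X, has_gradient L X (gL X)) ->
  locally_smooth gL ->
  gradient_flow T Pa Rint L Wt ->
  forall nu nuc r, int_node T Pa nu -> nuc \in children T Pa nu ->
    (r < rk D Rint nu)%N ->
  forall t : R, 0 <= t ->
    let rhs := 2 * sigma D T Pa Rint (Wt t) nu r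
               * tdot (fun i => - gL (end_tensor T Pa Rint (Wt t)) i)
                      (E_tensor T Pa Rint (Wt t) nu r) in
    is_derive t 1 (fun s : R => rownorm2 D Pa Rint (Wt s) nu r) rhs /\
    is_derive t 1 (fun s : R => colnorm2 D Rint (Wt s) nuc r) rhs.
Proof.
(* Local smoothness is only needed for the flow to exist. *)
move=> HT HL _ Hflow nu nuc r /andP[nuT nuI] Hnuc Hr t t0 rhs.
have [nucT nuc_top Pnuc] := in_children Hnuc.
have rhsE : rhs = - 2 * tdot (gL (end_tensor T Pa Rint (Wt t))) (component T Pa Rint nu (Wt t) r).
  by rewrite /rhs tdotNl -(sigma_mul_E_tensor D Rint HT nuT) tdotZr; ring.
split; apply: is_derive_eq.
- by apply: is_derive_sum_sqr => j; apply: Hflow.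
- by rewrite rhsE (dphi_row_sum HT nuT nuI HL).
- apply: is_derive_sum_sqr => a; apply: Hflow => //.
  by rewrite /prk (negbTE nuc_top) Pnuc.
- by rewrite rhsE (dphi_col_sum HT nuT nuI HL).
Qed.
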